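(* Let $X$ be a set of $n$ points with similarity function $S$, suppose the target clustering $\mathcal{C}^{\ast}=\{C^{\ast}_1,\dots,C^{\ast}_k\}$ satisfies strict threshold separation with respect to $S$, and suppose the initial clustering has clustering error $\gamma$, where $\gamma$ is any natural clustering error. In the $\eta$-merge model, for any $\eta>0$, the interactive algorithm using the local split procedure and the threshold merge procedure (described below) requires at most $O(\gamma+k)\log_{\frac{1}{1-\eta}} n$ edit requests to find the target clustering.
   Context: $\mathcal{C}^{\ast}$ satisfies strict threshold separation w.r.t. $S$ if there is a threshold $t$ such that $S(x,y)>t$ whenever $x,y$ are in the same target cluster and $S(x,y)\le t$ whenever they are in different target clusters. A natural clustering error is a function $\gamma$ assigning to each clustering $\mathcal{C}$ of $X$ a nonnegative integer $\gamma(\mathcal{C},\mathcal{C}^{\ast})$ such that for every clustering $\mathcal{C}$: (1) if a cluster $C_i\in\mathcal{C}$ contains points of $C^{\ast}_j$ and of some other target cluster, replacing $C_i$ by $C_i\cap C^{\ast}_j$ and $C_i\setminus C^{\ast}_j$ strictly decreases $\gamma$; (2) if two distinct clusters of $\mathcal{C}$ contain only points from the same target cluster, replacing them by their union strictly decreases $\gamma$. Process ($\eta$-merge model): start from the initial clustering, all clusters labelled ''impure''. An oracle repeatedly issues split$(C_i)$ (only if current $C_i$ has points of two or more target clusters) or merge$(C_i,C_j)$ for distinct current clusters (only if some $C^{\ast}_l$ has $|C_i\cap C^{\ast}_l|\ge\eta|C_i|$ and $|C_j\cap C^{\ast}_l|\ge\eta|C_j|$). Local split: build the average-linkage tree of $C_i$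 (leaves are singletons; repeatedly merge the two current nodes with largest average pairwise similarity, ties arbitrary) and replace $C_i$ by the two children of its root, labelled ''impure''. Threshold merge: $\eta_1=1$ if $C_i$ is ''pure'', else $\eta$; $\eta_2$ likewise. Starting from the edgeless graph on $C_i\cup C_j$, repeatedly add an edge between the not-yet-connected pair of highest similarity, stopping as soon as some connected component $N$ has $|N\cap C_i|\ge\eta_1|C_i|$ and $|N\cap C_j|\ge\eta_2|C_j|$; replace $C_i,C_j$ by $C_i\setminus N$, $C_j\setminus N$ (labels kept, empty clusters discarded) and add new cluster $N$ labelled ''pure''. The bound counts requests until the current clustering equals $\mathcal{C}^{\ast}$, for any sequence of allowed requests; $O(\cdot)$ hides an absolute constant. *)

From HB Require Import structures.
From mathcomp Require Import all_boot all_order all_algebra.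
From mathcomp Require Import reals exp.
Set Implicit Arguments. Unset Strict Implicit. Unset Printing Implicit Defensive.
Import Order.TTheory GRing.Theory Num.Theory.
Local Open Scope ring_scope.

Section Clustering.
Variables (R : realType) (T : finType).

(* A clustering of X = T: a partition of the whole ground set (no empty blocks). *)
Definition clustering (C : {set {set T}}) : Prop := partition C [set: T].

Definition strict_threshold_separation (S : T -> T -> R) (Cstar : {set {set T}}) :=
  exists t : R,
    (forall x y, (exists2 D, D \in Cstar & (x \in D) && (y \in D)) -> S x y > t) /\
    (forall x y, ~ (exists2 D, D \in Cstar & (x \in D) && (y \in D)) -> S x y <= t).

Definition natural_clustering_error (Cstar : {set {set T}})
    (gamma : {set {set T}} -> nat) : Prop :=
  (forall C, clustering C ->
     forall Ci Cj, Ci \in C -> Cj \in Cstar ->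
       Ci :&: Cj != set0 -> Ci :\: Cj != set0 ->
       (gamma ((C :\ Ci) :|: [set Ci :&: Cj; Ci :\: Cj]) < gamma C)%N) /\
  (forall C, clustering C ->
     forall Ci Cj Cl, Ci \in C -> Cj \in C -> Ci != Cj -> Cl \in Cstar ->
       Ci \subset Cl -> Cj \subset Cl ->
       (gamma ((C :\ Ci :\ Cj) :|: [set Ci :|: Cj]) < gamma C)%N).

Definition avg_sim (S : T -> T -> R) (A B : {set T}) : R :=
  (\sum_(x in A) \sum_(y in B) S x y) / (#|A| * #|B|)%:R.

Definition al_step (S : T -> T -> R) (Q Q' : {set {set T}}) : Prop :=
  exists A B, [/\ A \in Q, B \in Q, A != B,
    (forall A' B', A' \in Q -> B' \in Q -> A' != B' ->
        avg_sim S A' B' <= avg_sim S A B) &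
    Q' = (Q :\ A :\ B) :|: [set A :|: B]].

Inductive al_reach (S : T -> T -> R) (D : {set T}) : {set {set T}} -> Prop :=
  | al_start : al_reach S D [set [set x] | x in D]
  | al_next Q Q' : al_reach S D Q -> al_step S Q Q' -> al_reach S D Q'.

(* (A, B) are the two children of the root of some average-linkage tree of D. *)
Definition local_split (S : T -> T -> R) (D A B : {set T}) : Prop :=
  A != B /\ al_reach S D [set A; B].

(* Threshold-merge graph process on U = Ci :|: Cj. Edges stored as ordered
   pairs, read symmetrically. *)
Definition edge_rel (E : {set T * T}) : rel T :=
  fun a b => ((a, b) \in E) || ((b, a) \in E).

Definition component (E : {set T * T}) (x : T) : {set T} :=
  [set y | connect (edge_rel E) x y].

Definition tm_stop (eta1 eta2 : R) (Ci Cj : {set T}) (E : {set T * T})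
    (N : {set T}) : Prop :=
  (exists2 x, x \in Ci :|: Cj & N = component E x) /\
  eta1 * #|Ci|%:R <= #|N :&: Ci|%:R /\ eta2 * #|Cj|%:R <= #|N :&: Cj|%:R.

Definition tm_step (S : T -> T -> R) (U : {set T}) (E E' : {set T * T}) : Prop :=
  exists x y, [/\ x \in U, y \in U, x != y, ~~ edge_rel E x y &
    (forall x' y', x' \in U -> y' \in U -> x' != y' -> ~~ edge_rel E x' y' ->
        S x' y' <= S x y)] /\
    E' = (x, y) |: E.

Inductive tm_reach (S : T -> T -> R) (eta1 eta2 : R) (Ci Cj : {set T})
    : {set T * T} -> Prop :=
  | tm_start : tm_reach S eta1 eta2 Ci Cj set0
  | tm_next E E' : tm_reach S eta1 eta2 Ci Cj E ->
      (forall N, ~ tm_stop eta1 eta2 Ci Cj E N) ->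
      tm_step S (Ci :|: Cj) E E' -> tm_reach S eta1 eta2 Ci Cj E'.

Definition threshold_merge (S : T -> T -> R) (eta1 eta2 : R)
    (Ci Cj N : {set T}) : Prop :=
  exists2 E, tm_reach S eta1 eta2 Ci Cj E & tm_stop eta1 eta2 Ci Cj E N.

(* State of the process: current clusters, and those labelled "pure". *)
Definition state := ({set {set T}} * {set {set T}})%type.

Definition impure_wrt (Cstar : {set {set T}}) (D : {set T}) : Prop :=
  exists D1 D2, [/\ D1 \in Cstar, D2 \in Cstar, D1 != D2,
                    D :&: D1 != set0 & D :&: D2 != set0].

(* One edit request (split or merge, as allowed in the eta-merge model)
   followed by the corresponding algorithm update. *)
Definition step (S : T -> T -> R) (Cstar : {set {set T}}) (eta : R)
    (s s' : state) : Prop :=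
  let: (P, Pu) := s in
  (exists Ci A B, [/\ Ci \in P, impure_wrt Cstar Ci, local_split S Ci A B &
      s' = ((P :\ Ci) :|: [set A; B], Pu :\ Ci :\ A :\ B)]) \/
  (exists Ci Cj N, [/\ Ci \in P, Cj \in P & Ci != Cj] /\ [/\
      (exists2 Cl, Cl \in Cstar & eta * #|Ci|%:R <= #|Ci :&: Cl|%:R /\
                                  eta * #|Cj|%:R <= #|Cj :&: Cl|%:R),
      threshold_merge S (if Ci \in Pu then 1 else eta)
                        (if Cj \in Pu then 1 else eta) Ci Cj N &
      s' = (((P :\ Ci :\ Cj) :|: [set Ci :\: N; Cj :\: N; N]) :\ set0,
            ((Pu :\ Ci :\ Cj) :|: [set N]
               :|: (if Ci \in Pu then [set Ci :\: N] else set0)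
               :|: (if Cj \in Pu then [set Cj :\: N] else set0)) :\ set0)]).

(* log_{1/(1-eta)} n, taken to be 0 when eta >= 1 (infinite base). *)
Definition log_factor (eta : R) (n : nat) : R :=
  if eta < 1 then ln (n%:R) / ln ((1 - eta)^-1) else 0.

End Clustering.

(* The number of requests is bounded by a potential that every request lowers
   by at least one.  Let [meets X] be the set of target clusters met by X,
   [budget X = 1 + log_{1/(1-eta)} |X|] and [K = 1 + max 1 (log_{1/(1-eta)} n)];
   the potential is
     2 * (sum of the budgets of the clusters not labelled pure)
     + (number of pure labels) + (2K + 1) * (sum over clusters of |meets X| - 1).
   Under strict threshold separation, average linkage on an impure cluster keeps
   all its nodes pure until it first joins two target clusters, and from then on
   its nodes meet pairwise disjoint sets of target clusters; hence the two
   children of the root meet at most as many target clusters as their parent,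
   the last sum drops by one and pays for the (at most 2K) budget of the new
   clusters.  Threshold merge adds only edges inside target clusters before it
   stops, so the new cluster N is pure; it takes an eta-fraction of an
   impure-labelled side, whose budget then drops by one, and all of a
   pure-labelled side, whose label disappears.  Initially the potential is at
   most (2K + 1) * sum |meets X|, and a natural clustering error gamma satisfies
   2 * sum |meets X| <= gamma + k + |C| (induct on gamma, fixing one error). *)

From HB Require Import structures.
From mathcomp Require Import all_boot all_order all_algebra.
From mathcomp Require Import reals exp.
From mathcomp Require Import zify lra.
Set Implicit Arguments. Unset Strict Implicit. Unset Printing Implicit Defensive.
Import Order.TTheory GRing.Theory Num.Theory.
Local Open Scope ring_scope.

Section LogFactor.
Variables (R : realType) (eta : R).
Hypotheses (eta_gt0 : 0 < eta) (eta_le1 : eta <= 1).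

Lemma ln_inv_1subr_gt0 : eta < 1 -> 0 < ln ((1 - eta)^-1).
Proof. by move=> eta_lt1; rewrite ln_gt0 // invf_gt1 ?subr_gt0 // gtrBl. Qed.

Lemma log_factor_ge0 n : (0 < n)%N -> 0 <= log_factor eta n.
Proof.
move=> n_gt0; rewrite /log_factor; case: ifP => // eta_lt1.
apply: divr_ge0; [by rewrite ln_ge0 ?ler1n | exact/ltW/ln_inv_1subr_gt0].
Qed.

Lemma log_factor_le m n : (0 < m)%N -> (m <= n)%N ->
  log_factor eta m <= log_factor eta n.
Proof.
move=> m_gt0 le_mn; rewrite /log_factor; case: ifP => // eta_lt1.
rewrite ler_pM2r ?invr_gt0 ?ln_inv_1subr_gt0 // ler_ln ?ler_nat // posrE ltr0n //.
exact: leq_trans le_mn.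
Qed.

(* The base of the logarithm is [1/(1-eta)], so shrinking by [1 - eta] costs
   exactly one unit. *)
Lemma log_factor_shrink m n : (0 < m)%N -> m%:R <= (1 - eta) * n%:R ->
  log_factor eta m + 1 <= log_factor eta n.
Proof.
move=> m_gt0 le_mn; have m_ge1 : (1 : R) <= m%:R by rewrite ler1n.
rewrite /log_factor; case: (ltP eta 1) => [eta_lt1|eta_ge1]; last first.
  have eta1 : eta = 1 by apply/eqP; rewrite eq_le eta_le1.
  by move: (le_trans m_ge1 le_mn); rewrite eta1 subrr mul0r ler10.
have one_sub_gt0 : 0 < 1 - eta by rewrite subr_gt0.
have n_gt0 : (0 : R) < n%:R.
  rewrite ltr0n lt0n; apply: contraTneq le_mn => ->.
  by rewrite mulr0 -ltNge (lt_le_trans ltr01).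
have := ln_inv_1subr_gt0 eta_lt1; rewrite lnV ?posrE // => lnb_gt0.
have : ln m%:R <= ln (1 - eta) + ln n%:R.
  by rewrite -lnM ?posrE // ler_ln // posrE ?mulr_gt0 // (lt_le_trans ltr01).
rewrite -[X in _ + X <= _](@divff _ (- ln (1 - eta))) ?gt_eqF // -mulrDl.
by rewrite ler_pM2r ?invr_gt0 // lerBlDl.
Qed.

End LogFactor.

Section SumsOverSets.
Variables (I : finType) (R : numDomainType) (F : I -> R).
Hypothesis F_ge0 : forall i, 0 <= F i.

Lemma ler_sum_subset (A B : {set I}) : A \subset B ->
  \sum_(i in A) F i <= \sum_(i in B) F i.
Proof.
move=> sAB; rewrite [X in _ <= X](big_setID A) (setIidPr sAB) /=.
by rewrite lerDl sumr_ge0.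
Qed.

Lemma ler_sum_setU (A B : {set I}) :
  \sum_(i in A :|: B) F i <= \sum_(i in A) F i + \sum_(i in B) F i.
Proof.
rewrite (big_setID A) /= (setIidPr (subsetUl A B)) lerD2l.
by apply: ler_sum_subset; rewrite setDUl setDv set0U subsetDl.
Qed.

Lemma ler_sum_set2 a b : \sum_(i in [set a; b]) F i <= F a + F b.
Proof. by apply: le_trans (ler_sum_setU _ _) _; rewrite !big_set1. Qed.

Lemma ler_sum_set3 a b c :
  \sum_(i in [set a; b; c]) F i <= F a + F b + F c.
Proof.
by apply: le_trans (ler_sum_setU _ _) _; rewrite big_set1 lerD2r ler_sum_set2.
Qed.

Lemma big_setD1_indicator (A : {set I}) a :
  \sum_(i in A) F i = (a \in A)%:R * F a + \sum_(i in A :\ a) F i.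
Proof.
have [aA|aNA] := boolP (a \in A); first by rewrite mul1r (big_setD1 _ aA).
rewrite mul0r add0r; apply: eq_bigl => i; rewrite !inE.
by case: eqP => // ->; apply/negbTE.
Qed.

End SumsOverSets.

Lemma trivIset_mem_eq (T : finType) (P : {set {set T}}) A B x :
  trivIset P -> A \in P -> B \in P -> x \in A -> x \in B -> A = B.
Proof.
by move=> tiP AP BP xA xB; rewrite -(def_pblock tiP AP xA) (def_pblock tiP BP xB).
Qed.

Section PartitionEdits.
Variables (T : finType) (P : {set {set T}}).
Implicit Types (X Y A a b : {set T}).

Lemma card_split_le X a b : X \in P -> (#|(P :\ X) :|: [set a; b]| <= #|P| + 1)%N.
Proof.
move=> XP; apply: leq_trans (leq_card_setU _ _).1 _.
rewrite (cardsD1 X P) XP /= cards2; set k := #|P :\ X|; case: (a == b) => /=; lia.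
Qed.

Lemma card_merge_lt X Y : X \in P -> Y \in P -> X != Y ->
  (#|(P :\ X :\ Y) :|: [set X :|: Y]| < #|P|)%N.
Proof.
move=> XP YP neXY; apply: leq_ltn_trans (leq_card_setU _ _).1 _.
rewrite cards1 (cardsD1 X P) XP /= (cardsD1 Y (P :\ X)) !inE eq_sym neXY YP /=.
by rewrite addn1 add1n ltnS ltnSn.
Qed.

Variable D : {set T}.
Hypothesis P_part : partition P D.

Lemma partition_set1 : partition [set [set x] | x in D] D.
Proof.
apply/and3P; split.
- rewrite cover_imset; apply/eqP/setP => y; apply/bigcupP/idP => [[x xD]|yD].
    by rewrite inE => /eqP ->.
  by exists y; rewrite ?inE.
- apply/trivIsetP => _ _ /imsetP [x _ ->] /imsetP [y _ ->] ne.
  by rewrite disjoints1 in_set1; apply: contraNneq ne => ->.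
- by apply/imsetP => -[x _ /esym/eqP]; rewrite -subset0 sub1set inE.
Qed.

Lemma partition_split X A : X \in P -> X :&: A != set0 -> X :\: A != set0 ->
  partition ((P :\ X) :|: [set X :&: A; X :\: A]) D.
Proof.
move=> XP XA_n0 XDA_n0; have sXD := partitionS P_part XP.
have disj1 : [disjoint X :&: A & D :\: X].
  by rewrite -setI_eq0; apply/eqP/setP => y; rewrite !inE; case: (y \in X); rewrite ?andbF.
have disj2 : [disjoint X :\: A & X :&: A :|: D :\: X].
  rewrite -setI_eq0; apply/eqP/setP => y; rewrite !inE.
  by case: (y \in X); case: (y \in A); rewrite ?andbF.
have := partitionU1 (partitionU1 (partitionD1 P_part XP) XA_n0 disj1) XDA_n0 disj2.
congr partition.
  by apply/setP => Z; rewrite !inE; case: (Z == X :\: A); case: (Z == X :&: A); rewrite ?orbT ?orbF.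
by rewrite setUA [X :\: A :|: _]setUC setID setDE setUIr setUCr setIT (setUidPr sXD).
Qed.

Lemma partition_merge X Y : X \in P -> Y \in P -> X != Y ->
  partition ((P :\ X :\ Y) :|: [set X :|: Y]) D.
Proof.
move=> XP YP neXY.
have YPX : Y \in P :\ X by rewrite !inE eq_sym neXY.
have XY_n0 : X :|: Y != set0.
  by rewrite setU_eq0 negb_and (partition_neq0 P_part XP).
have disj : [disjoint X :|: Y & D :\: X :\: Y].
  rewrite -setI_eq0; apply/eqP/setP => y; rewrite !inE.
  by case: (y \in X); case: (y \in Y); rewrite ?andbF.
have := partitionU1 (partitionD1 (partitionD1 P_part XP) YPX) XY_n0 disj.
have sXYD : X :|: Y \subset D by rewrite subUset !(partitionS P_part).
rewrite setUC; congr partition.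
by rewrite setDDl setDE setUIr setUCr setIT (setUidPr sXYD).
Qed.

End PartitionEdits.

Section Targets.
Variables (T : finType) (Cstar : {set {set T}}).
Hypothesis Cstar_clust : clustering Cstar.
Implicit Types (X Y Z A B D N l : {set T}) (C Q P Pu : {set {set T}}).

Definition pure X := exists2 l, l \in Cstar & X \subset l.

Definition meets X := [set l in Cstar | X :&: l != set0].

Definition total_meets C := (\sum_(X in C) #|meets X|)%N.

Lemma target_eq l1 l2 x :
  l1 \in Cstar -> l2 \in Cstar -> x \in l1 -> x \in l2 -> l1 = l2.
Proof. exact: trivIset_mem_eq (partition_trivIset Cstar_clust). Qed.

Lemma target_cover x : exists2 l, l \in Cstar & x \in l.
Proof.
have : x \in cover Cstar by rewrite (cover_partition Cstar_clust) inE.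
by case/bigcupP => l; exists l.
Qed.

Lemma target_of_subset X l l' : l \in Cstar -> l' \in Cstar ->
  X \subset l' -> X :&: l != set0 -> l = l'.
Proof.
move=> Hl Hl' sXl' /set0Pn [x]; rewrite inE => /andP [xX xl].
exact: target_eq Hl Hl' xl (subsetP sXl' x xX).
Qed.

Lemma meetsS X Y : X \subset Y -> meets X \subset meets Y.
Proof.
move=> sXY; apply/subsetP => l; rewrite !inE => /andP [-> /set0Pn [x]].
by rewrite inE => /andP [xX xl]; apply/set0Pn; exists x; rewrite inE xl (subsetP sXY).
Qed.

Lemma meets_gt0 X : X != set0 -> (0 < #|meets X|)%N.
Proof.
case/set0Pn => x xX; have [l Hl xl] := target_cover x.
by rewrite card_gt0; apply/set0Pn; exists l; rewrite inE Hl; apply/set0Pn; exists x; rewrite inE xX.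
Qed.

Lemma pure_meets_le1 X : pure X -> (#|meets X| <= 1)%N.
Proof.
case=> l Hl sXl; rewrite -(cards1 l); apply/subset_leq_card/subsetP => l'.
by rewrite !inE => /andP [Hl' /(target_of_subset Hl' Hl sXl) ->].
Qed.

Lemma meets_le1_subset X l : (#|meets X| <= 1)%N -> l \in meets X -> X \subset l.
Proof.
move=> le1 lX; apply/subsetP => x xX; have [l' Hl' xl'] := target_cover x.
have l'X : l' \in meets X by rewrite inE Hl'; apply/set0Pn; exists x; rewrite inE xX.
have : (#|[set l; l']| <= 1)%N.
  by apply: leq_trans le1; apply: subset_leq_card; rewrite subUset !sub1set lX l'X.
by rewrite cards2; case: eqP => // ->.
Qed.

Lemma meetsU A B : meets (A :|: B) = meets A :|: meets B.
Proof.
apply/setP => l; rewrite !inE setIUl setU_eq0 negb_and.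
by case: (l \in Cstar).
Qed.

Lemma meets_setU_le X A B : X \subset A :|: B ->
  (#|meets X| <= #|meets A| + #|meets B|)%N.
Proof.
move=> sXAB; apply: leq_trans (leq_card_setU _ _).1.
by rewrite -meetsU subset_leq_card // meetsS.
Qed.

Lemma meets_gt1_cut X : (1 < #|meets X|)%N ->
  exists2 l, l \in Cstar & (X :&: l != set0) && (X :\: l != set0).
Proof.
move=> gt1; have /set0Pn [l] : meets X != set0 by rewrite -card_gt0 ltnW.
rewrite inE => /andP [Hl XIl]; exists l; rewrite // XIl /= setD_eq0.
by apply: contraTN gt1 => sXl; rewrite -leqNgt pure_meets_le1 //; exists l.
Qed.

Lemma impure_not_pure X : impure_wrt Cstar X -> ~ pure X.
Proof.
case=> [D1 [D2 [H1 H2 neD hit1 hit2]]] [l Hl sXl].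
by move: neD; rewrite (target_of_subset H1 Hl sXl hit1) (target_of_subset H2 Hl sXl hit2) eqxx.
Qed.

Definition shares_target C := [exists X in C, exists Y in C, exists l in Cstar,
  [&& X != Y, X \subset l & Y \subset l]].

Lemma clustering_sub_eq C X Y : clustering C -> X \in C -> Y \in C ->
  Y \subset X -> Y != set0 -> Y = X.
Proof.
move=> C_clust XC YC sYX /set0Pn [y yY].
exact: trivIset_mem_eq (partition_trivIset C_clust) YC XC yY (subsetP sYX y yY).
Qed.

Lemma card_le_total_meets C : clustering C -> (#|C| <= total_meets C)%N.
Proof.
move=> C_clust; rewrite -sum1_card; apply: leq_sum => X XC.
by rewrite meets_gt0 // (partition_neq0 C_clust XC).
Qed.

Lemma total_meets_split C X l : clustering C -> X \in C ->
  X :&: l != set0 -> X :\: l != set0 ->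
  (total_meets C <= total_meets ((C :\ X) :|: [set X :&: l; X :\: l]))%N.
Proof.
move=> C_clust XC XIl XDl.
have notin_CX Y : Y \subset X -> Y != set0 -> Y \notin C :\ X.
  move=> sYX Yn0; apply/negP; rewrite in_setD1 => /andP [neYX YC].
  by rewrite (clustering_sub_eq C_clust XC YC sYX Yn0) eqxx in neYX.
have neq : X :&: l != X :\: l.
  case/set0Pn: XIl => x; rewrite inE => /andP [xX xl]; apply/eqP => eqID.
  have : x \in X :\: l by rewrite -eqID inE xX xl.
  by rewrite inE xl.
have -> : (C :\ X) :|: [set X :&: l; X :\: l] = (X :&: l) |: ((X :\: l) |: (C :\ X)).
  by apply/setP => Z; rewrite !inE; case: (Z == X :&: l); case: (Z == X :\: l); rewrite ?orbT ?orbF.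
rewrite /total_meets big_setU1 ?big_setU1 ?notin_CX ?subsetDl //=; last first.
  by rewrite in_setU1 negb_or neq notin_CX ?subsetIl.
by rewrite (big_setD1 _ XC) addnA leq_add2r meets_setU_le // setID.
Qed.

Lemma total_meets_merge C X Y : clustering C -> X \in C -> Y \in C -> X != Y ->
  (#|meets X| <= 1)%N -> (#|meets Y| <= 1)%N ->
  (total_meets C <= total_meets ((C :\ X :\ Y) :|: [set X :|: Y]) + 1)%N.
Proof.
move=> C_clust XC YC neXY X_le1 Y_le1.
have Xn0 := partition_neq0 C_clust XC.
have XY_notin : X :|: Y \notin C :\ X :\ Y.
  apply/negP; rewrite !in_setD1 => /and3P [_ neX XYC].
  by rewrite -(clustering_sub_eq C_clust XYC XC (subsetUl X Y) Xn0) eqxx in neX.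
have YCX : Y \in C :\ X by rewrite in_setD1 eq_sym neXY YC.
have XY_gt0 : (0 < #|meets (X :|: Y)|)%N.
  by apply: meets_gt0; rewrite setU_eq0 negb_and Xn0.
rewrite setUC /total_meets big_setU1 //= (big_setD1 _ XC) (big_setD1 _ YCX) /=.
move: X_le1 Y_le1 XY_gt0 (\sum_(_ in _) _)%N; move: #|meets X| #|meets Y| #|meets (X :|: Y)|; lia.
Qed.

Lemma card_le_targets C : clustering C -> {in C, forall X, #|meets X| <= 1}%N ->
  ~~ shares_target C -> (#|C| <= #|Cstar|)%N.
Proof.
move=> C_clust le1 no_share.
pose tgt X := odflt X [pick l in meets X].
have tgtP X : X \in C -> tgt X \in meets X.
  move=> XC; rewrite /tgt; case: pickP => [l //|no_l].
  have /set0Pn [l] : meets X != set0 by rewrite -card_gt0 meets_gt0 ?(partition_neq0 C_clust).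
  by rewrite [l \in _]no_l.
have tgt_inj : {in C &, injective tgt}.
  move=> X Y XC YC eq_tgt; apply/eqP; apply: contraNT no_share => neXY.
  have XtX := tgtP X XC; have YtX := tgtP Y YC; rewrite -eq_tgt in YtX.
  apply/exists_inP; exists X => //; apply/exists_inP; exists Y => //.
  apply/exists_inP; exists (tgt X); first by move: XtX; rewrite inE => /andP [].
  by rewrite neXY !meets_le1_subset ?le1.
rewrite -(card_in_imset tgt_inj); apply/subset_leq_card/subsetP => _ /imsetP [X XC ->].
by move: (tgtP X XC); rewrite inE => /andP [].
Qed.

Lemma total_meets_le_error gamma C : natural_clustering_error Cstar gamma ->
  clustering C -> (2 * total_meets C <= gamma C + #|Cstar| + #|C|)%N.
Proof.
move=> [err_split err_merge]; move: {2}(gamma C).+1 (ltnSn (gamma C)) => n.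
elim: n C => // n IH C gamma_lt C_clust.
have [/exists_inP [X XC gt1] | no_gt1] := boolP [exists X in C, 1 < #|meets X|]%N.
  have [l Hl /andP [XIl XDl]] := meets_gt1_cut gt1.
  have lt_err := err_split C C_clust X l XC Hl XIl XDl.
  have := IH _ (leq_trans lt_err gamma_lt) (partition_split C_clust XC XIl XDl).
  have := total_meets_split C_clust XC XIl XDl.
  have := card_split_le (X :&: l) (X :\: l) XC.
  move: lt_err; move: (gamma _) (gamma _) (total_meets _) (total_meets _) #|_| #|_|.
  lia.
have le1 : {in C, forall X, #|meets X| <= 1}%N.
  by move=> X XC; rewrite leqNgt; apply: contraNN no_gt1 => gt1; apply/exists_inP; exists X.
have [share | no_share] := boolP (shares_target C); last first.
  have := card_le_targets C_clust le1 no_share.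
  have : (total_meets C <= #|C|)%N by rewrite -sum1_card; apply: leq_sum.
  lia.
case/exists_inP: share => X XC /exists_inP [Y YC /exists_inP [l Hl /and3P [neXY sXl sYl]]].
have lt_err := err_merge C C_clust X Y l XC YC neXY Hl sXl sYl.
have := IH _ (leq_trans lt_err gamma_lt) (partition_merge C_clust XC YC neXY).
have := total_meets_merge C_clust XC YC neXY (le1 X XC) (le1 Y YC).
have := card_merge_lt XC YC neXY.
move: lt_err; move: (gamma _) (gamma _) (total_meets _) (total_meets _) #|_| #|_|.
lia.
Qed.

Definition same_target x y := [exists l in Cstar, (x \in l) && (y \in l)].

Definition meets_disjoint Q :=
  {in Q &, forall X Y, X != Y -> [disjoint meets X & meets Y]}.

Lemma same_target_mem l x y : l \in Cstar -> same_target x y -> (x \in l) = (y \in l).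
Proof.
move=> Hl /exists_inP [l' Hl' /andP [xl' yl']].
apply/idP/idP => [xl|yl]; first by rewrite (target_eq Hl Hl' xl xl').
by rewrite (target_eq Hl Hl' yl yl').
Qed.

Lemma meets_disjoint_merge Q A B : meets_disjoint Q -> A \in Q -> B \in Q ->
  meets_disjoint ((Q :\ A :\ B) :|: [set A :|: B]).
Proof.
have meetsU_disjoint X : X \in Q -> X != A -> X != B -> meets_disjoint Q -> A \in Q -> B \in Q ->
    [disjoint meets X & meets (A :|: B)].
  move=> XQ neXA neXB disjQ AQ BQ.
  by rewrite -setI_eq0 meetsU setIUr setU_eq0 !setI_eq0 !disjQ.
move=> disjQ AQ BQ X Y; rewrite !inE.
move=> /orP [/and3P [neXB neXA XQ] | /eqP ->] /orP [/and3P [neYB neYA YQ] | /eqP ->] neXY.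
- exact: disjQ.
- exact: meetsU_disjoint.
- by rewrite disjoint_sym meetsU_disjoint.
- by rewrite eqxx in neXY.
Qed.

Lemma pure_meets_disjoint Q : {in Q, forall X, pure X} -> ~~ shares_target Q ->
  meets_disjoint Q.
Proof.
move=> Qpure no_share X Y XQ YQ neXY; rewrite -setI_eq0.
apply: contraNT no_share => /set0Pn [l]; rewrite !inE => /andP [/andP [Hl hitX] /andP [_ hitY]].
have [lX HlX sXl] := Qpure X XQ; have [lY HlY sYl] := Qpure Y YQ.
have eX := target_of_subset Hl HlX sXl hitX; have eY := target_of_subset Hl HlY sYl hitY.
apply/exists_inP; exists X => //; apply/exists_inP; exists Y => //.
by apply/exists_inP; exists l => //; rewrite neXY {1}eX sXl eY sYl.
Qed.

Definition split_state (s : state T) D A B : state T :=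
  ((s.1 :\ D) :|: [set A; B], s.2 :\ D :\ A :\ B).

Definition merge_state (s : state T) Ci Cj N : state T :=
  (((s.1 :\ Ci :\ Cj) :|: [set Ci :\: N; Cj :\: N; N]) :\ set0,
   ((s.2 :\ Ci :\ Cj) :|: [set N]
      :|: (if Ci \in s.2 then [set Ci :\: N] else set0)
      :|: (if Cj \in s.2 then [set Cj :\: N] else set0)) :\ set0).

Definition wf_state (s : state T) := set0 \notin s.1 /\ {in s.2, forall X, pure X}.

Section MergeLabels.
Variables (P Pu : {set {set T}}) (Ci Cj N : {set T}).
Hypothesis neij : Ci != Cj.

Lemma merge_labels_subset : (Ci \in Pu -> Ci :\: N = set0) ->
  (Cj \in Pu -> Cj :\: N = set0) ->
  (merge_state (P, Pu) Ci Cj N).2 \subset N |: (Pu :\ Ci :\ Cj).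
Proof.
move=> Ci_empty Cj_empty; apply/subsetP => X; rewrite /= in_setD1 !in_setU.
case: ifP => [/Ci_empty -> | _]; case: ifP => [/Cj_empty -> | _]; rewrite !inE;
by case: (X == set0); case: (X == N); case: (X \in Pu); case: (X == Ci); case: (X == Cj).
Qed.

Lemma card_merge_labels : (Ci \in Pu -> Ci :\: N = set0) -> (Cj \in Pu -> Cj :\: N = set0) ->
  (#|(merge_state (P, Pu) Ci Cj N).2| + (Ci \in Pu) + (Cj \in Pu) <= #|Pu| + 1)%N.
Proof.
move=> Ci_empty Cj_empty.
have := subset_leq_card (merge_labels_subset Ci_empty Cj_empty); rewrite cardsU1.
rewrite [#|Pu|](cardsD1 Ci) [#|Pu :\ Ci|](cardsD1 Cj) [Cj \in Pu :\ Ci]in_setD1 (eq_sym Cj) neij /=.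
move: (N \notin _) (Ci \in Pu) (Cj \in Pu) #|_ :\ Cj| #|_| => [] [] [] *; lia.
Qed.

End MergeLabels.

Lemma threshold_of_separation (R : realType) (S : T -> T -> R) :
  strict_threshold_separation S Cstar -> exists t : R,
    (forall x y, same_target x y -> t < S x y) /\
    (forall x y, ~~ same_target x y -> S x y <= t).
Proof.
case=> t [S_in S_out]; exists t.
by split=> x y /exists_inP; [apply: S_in | apply: S_out].
Qed.

Section Excess.
Variable R : realType.

Definition excess C : R := \sum_(X in C) (#|meets X|.-1)%:R.

Lemma excess_ge0 C : 0 <= excess C.
Proof. exact: sumr_ge0. Qed.

Lemma total_meets_excess C : clustering C -> (total_meets C)%:R = excess C + #|C|%:R :> R.
Proof.
move=> C_clust; rewrite /total_meets /excess natr_sum -sum1_card natr_sum -big_split /=.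
apply: eq_bigr => X XC; rewrite -natrD addn1 prednK //.
by rewrite meets_gt0 // (partition_neq0 C_clust XC).
Qed.

Lemma excess_split P D A B : D \in P -> A != set0 -> B != set0 ->
  (#|meets A| + #|meets B| <= #|meets D|)%N ->
  excess ((P :\ D) :|: [set A; B]) + 1 <= excess P.
Proof.
move=> DP An0 Bn0 le_meets.
have := ler_sum_setU (fun X => ler0n R (#|meets X|.-1)) (P :\ D) [set A; B].
have := ler_sum_set2 (fun X => ler0n R (#|meets X|.-1)) A B.
have : ((#|meets A|.-1)%:R + (#|meets B|.-1)%:R + 1 <= (#|meets D|.-1)%:R :> R).
  rewrite -natrD natr1 ler_nat; move: (meets_gt0 An0) (meets_gt0 Bn0) le_meets; lia.
rewrite /excess (big_setD1_indicator _ P D) DP mul1r.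
move: (\sum_(_ in _) _) (\sum_(_ in _) _) (\sum_(_ in _) _).
move=> *; lra.
Qed.

Lemma excess_merge P Pu Ci Cj N : Ci \in P -> Cj \in P -> Ci != Cj -> pure N ->
  excess (merge_state (P, Pu) Ci Cj N).1 <= excess P.
Proof.
move=> CiP CjP neij Npure; have F_ge0 X : 0 <= (#|meets X|.-1)%:R :> R by [].
have meetsN : (#|meets N|.-1)%:R = 0 :> R.
  by move: (pure_meets_le1 Npure); case: #|meets N| => [|[]].
have leftover_le Z : (#|meets (Z :\: N)|.-1)%:R <= (#|meets Z|.-1)%:R :> R.
  by rewrite ler_nat -!subn1 leq_sub2r // subset_leq_card // meetsS // subsetDl.
have CjPCi : Cj \in P :\ Ci by rewrite in_setD1 eq_sym neij.
have := ler_sum_subset F_ge0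
  (subsetDl ((P :\ Ci :\ Cj) :|: [set Ci :\: N; Cj :\: N; N]) [set set0]).
have := ler_sum_setU F_ge0 (P :\ Ci :\ Cj) [set Ci :\: N; Cj :\: N; N].
have := ler_sum_set3 F_ge0 (Ci :\: N) (Cj :\: N) N.
have := leftover_le Ci; have := leftover_le Cj.
rewrite /excess /= (big_setD1_indicator _ P Ci) (big_setD1_indicator _ (P :\ Ci) Cj).
rewrite CiP CjPCi !mul1r meetsN.
move: (\sum_(_ in _) _) (\sum_(_ in _) _) (\sum_(_ in _) _) (\sum_(_ in _) _).
move=> *; lra.
Qed.

End Excess.

Arguments excess {R} C.

Section Separation.
Variables (R : realType) (S : T -> T -> R) (t : R).
Hypothesis S_in : forall x y, same_target x y -> t < S x y.
Hypothesis S_out : forall x y, ~~ same_target x y -> S x y <= t.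

Lemma sum_sum_const A B (c : R) :
  \sum_(x in A) \sum_(y in B) c = c * (#|A| * #|B|)%:R.
Proof.
under eq_bigr do rewrite sumr_const.
by rewrite sumr_const -mulrnA mulr_natr mulnC.
Qed.

Lemma card_mul_gt0 A B : A != set0 -> B != set0 -> (0 : R) < (#|A| * #|B|)%:R.
Proof. by move=> An0 Bn0; rewrite ltr0n muln_gt0 !card_gt0 An0. Qed.

Lemma avg_sim_gt A B l : A != set0 -> B != set0 -> l \in Cstar ->
  A \subset l -> B \subset l -> t < avg_sim S A B.
Proof.
move=> An0 Bn0 Hl sAl sBl.
rewrite /avg_sim ltr_pdivlMr ?card_mul_gt0 // -sum_sum_const.
have /set0Pn [a aA] := An0; have /set0Pn [b bB] := Bn0.
apply: ltr_sum => [|x xA]; first by apply/hasP; exists a; rewrite ?mem_index_enum.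
apply: ltr_sum => [|y yB]; first by apply/hasP; exists b; rewrite ?mem_index_enum.
by apply/S_in/exists_inP; exists l; rewrite // (subsetP sAl) ?(subsetP sBl).
Qed.

Lemma avg_sim_le A B l1 l2 : A != set0 -> B != set0 -> l1 \in Cstar -> l2 \in Cstar ->
  l1 != l2 -> A \subset l1 -> B \subset l2 -> avg_sim S A B <= t.
Proof.
move=> An0 Bn0 Hl1 Hl2 nel sAl sBl.
rewrite /avg_sim ler_pdivrMr ?card_mul_gt0 // -sum_sum_const.
apply: ler_sum => x xA; apply: ler_sum => y yB; apply/S_out/exists_inP => -[l Hl /andP [xl yl]].
move: nel; rewrite -(target_eq Hl Hl1 xl (subsetP sAl x xA)).
by rewrite -(target_eq Hl Hl2 yl (subsetP sBl y yB)) eqxx.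
Qed.

Definition al_invariant D Q :=
  partition Q D /\ ({in Q, forall X, pure X} \/ meets_disjoint Q).

(* Once a merge joins two different target clusters, no node pair lies inside a
   common target cluster any more (it would have a larger average similarity),
   so from then on distinct nodes meet disjoint sets of target clusters. *)
Lemma al_step_invariant D Q Q' : al_invariant D Q -> al_step S Q Q' ->
  al_invariant D Q'.
Proof.
move=> [Q_part Q_sep] [A [B [AQ BQ neAB ABmax ->]]].
split; first exact: partition_merge.
case: Q_sep => [Qpure | Qdisj]; last by right; apply: meets_disjoint_merge.
have [share | no_share] := boolP (shares_target Q); last first.
  by right; apply: meets_disjoint_merge => //; apply: pure_meets_disjoint.
case/exists_inP: share => X XQ /exists_inP [Y YQ /exists_inP [l Hl /and3P [neXY sXl sYl]]].
have [lA HlA sAl] := Qpure A AQ; have [lB HlB sBl] := Qpure B BQ.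
have eqAB : lA = lB.
  apply/eqP; apply: contraTT (ABmax X Y XQ YQ neXY) => neAB'; rewrite -ltNge.
  apply: le_lt_trans (avg_sim_gt _ _ Hl sXl sYl); rewrite ?(partition_neq0 Q_part) //.
  by apply: avg_sim_le HlA HlB neAB' sAl sBl; rewrite (partition_neq0 Q_part).
left => Z; rewrite !inE => /orP [/and3P [_ _ /Qpure //] | /eqP ->].
by exists lA; rewrite // subUset sAl eqAB sBl.
Qed.

Lemma al_reach_invariant D Q : al_reach S D Q -> al_invariant D Q.
Proof.
elim=> [|Q1 Q2 _ inv step]; last exact: al_step_invariant inv step.
split; first exact: partition_set1.
left => _ /imsetP [x _ ->]; have [l Hl xl] := target_cover x.
by exists l; rewrite // sub1set.
Qed.

Lemma local_split_meets D A B : impure_wrt Cstar D -> local_split S D A B ->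
  [/\ A != set0, B != set0, A \subset D, B \subset D &
      (#|meets A| + #|meets B| <= #|meets D|)%N].
Proof.
move=> Dimp [neAB /al_reach_invariant [AB_part AB_sep]].
have AAB : A \in [set A; B] by rewrite !inE eqxx.
have BAB : B \in [set A; B] by rewrite !inE eqxx orbT.
have ABD : A :|: B = D.
  by rewrite -(cover_partition AB_part) /cover big_setU1 ?inE // big_set1.
have disjAB : [disjoint meets A & meets B].
  case: AB_sep => [ABpure | ABdisj]; last exact: ABdisj.
  rewrite -setI_eq0; apply: contraT => /set0Pn [l].
  rewrite !inE => /andP [/andP [Hl hitA] /andP [_ hitB]].
  have [lA HlA sAl] := ABpure A AAB; have [lB HlB sBl] := ABpure B BAB.
  case: (impure_not_pure Dimp); exists l => //; rewrite -ABD subUset.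
  by rewrite {1}(target_of_subset Hl HlA sAl hitA) (target_of_subset Hl HlB sBl hitB) sAl sBl.
split; rewrite ?(partition_neq0 AB_part) ?(partitionS AB_part) //.
by rewrite -cardsUI (disjoint_setI0 disjAB) cards0 addn0 -meetsU ABD.
Qed.

Section ThresholdMerge.
Variables (eta e1 e2 : R) (Ci Cj Cl : {set T}).
Hypotheses (eta_gt0 : 0 < eta) (Ci_n0 : Ci != set0) (Cj_n0 : Cj != set0).
Hypothesis Cl_target : Cl \in Cstar.
Hypotheses (Ci_frac : eta * #|Ci|%:R <= #|Ci :&: Cl|%:R)
           (Cj_frac : eta * #|Cj|%:R <= #|Cj :&: Cl|%:R).
Hypotheses (e1_ok : e1 = eta \/ e1 = 1 /\ pure Ci) (e2_ok : e2 = eta \/ e2 = 1 /\ pure Cj).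

Lemma frac_meet Z : Z != set0 -> eta * #|Z|%:R <= #|Z :&: Cl|%:R -> Z :&: Cl != set0.
Proof.
move=> Zn0 frac; rewrite -card_gt0 -(ltr0n R); apply: lt_le_trans frac.
by rewrite mulr_gt0 // ltr0n card_gt0.
Qed.

Lemma threshold_covered Z e N : Z != set0 -> eta * #|Z|%:R <= #|Z :&: Cl|%:R ->
  e = eta \/ e = 1 /\ pure Z -> Z :&: Cl \subset N -> e * #|Z|%:R <= #|N :&: Z|%:R.
Proof.
move=> Zn0 frac [-> | [-> [l Hl sZl]]] sZN.
  by apply: le_trans frac _; rewrite ler_nat subset_leq_card // subsetI sZN subsetIl.
have eZl := target_of_subset Cl_target Hl sZl (frac_meet Zn0 frac).
rewrite mul1r ler_nat subset_leq_card // subsetI subxx andbT.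
by apply: subset_trans sZN; rewrite subsetI subxx eZl.
Qed.

Lemma stop_once_connected E z : z \in Ci :&: Cl ->
  {in Ci :|: Cj &, forall x y, x != y -> same_target x y -> edge_rel E x y} ->
  tm_stop e1 e2 Ci Cj E (component E z).
Proof.
rewrite inE => /andP [zCi zCl] connected.
have sub_comp Z : Z \subset Ci :|: Cj -> Z :&: Cl \subset component E z.
  move=> sZU; apply/subsetP => y; rewrite !inE => /andP [yZ yCl].
  have [<-|nezy] := eqVneq z y; first exact: connect0.
  apply/connect1/connected => //; first by rewrite inE zCi.
    exact: subsetP sZU y yZ.
  by apply/exists_inP; exists Cl; rewrite ?zCl.
split; first by exists z; rewrite // inE zCi.
split; first exact: threshold_covered Ci_n0 Ci_frac e1_ok (sub_comp _ (subsetUl _ _)).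
exact: threshold_covered Cj_n0 Cj_frac e2_ok (sub_comp _ (subsetUr _ _)).
Qed.

(* An edge across target clusters has similarity at most [t], so when it is the
   best remaining pair all same-target pairs are already joined, and the process
   would have stopped before adding it. *)
Lemma tm_reach_same_target E : tm_reach S e1 e2 Ci Cj E ->
  forall a b, (a, b) \in E -> same_target a b.
Proof.
elim=> [a b|E1 E2 _ IH no_stop [x [y [[xU yU nexy _ Smax] ->]]]]; first by rewrite inE.
move=> a b; rewrite in_setU1 => /orP [/eqP [-> ->] | /IH //].
apply: contraT => not_same; have /set0Pn [z zCiCl] := frac_meet Ci_n0 Ci_frac.
case: (no_stop (component E1 z)); apply: stop_once_connected zCiCl _.
move=> x' y' x'U y'U nexy' same'; apply: contraT => no_edge.
have := Smax x' y' x'U y'U nexy' no_edge.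
by rewrite leNgt (le_lt_trans (S_out not_same) (S_in same')).
Qed.

Lemma threshold_merge_pure N : threshold_merge S e1 e2 Ci Cj N -> pure N /\ N != set0.
Proof.
case=> E /tm_reach_same_target same_edges [[x _ ->] _].
have [l Hl xl] := target_cover x.
split; last by apply/set0Pn; exists x; rewrite inE connect0.
exists l => //; apply/subsetP => y; rewrite inE => xy.
have l_closed : closed (edge_rel E) (mem l).
  by move=> a b /orP [] /same_edges /(same_target_mem Hl) // ->.
by rewrite -(closed_connect l_closed xy).
Qed.

End ThresholdMerge.

Section Potential.
Variable eta : R.
Hypotheses (eta_gt0 : 0 < eta) (eta_le1 : eta <= 1).

Definition budget_cap : R := 1 + Num.max 1 (log_factor eta #|T|).

(* How many more merges can shrink a cluster by a factor [1 - eta]. *)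
Definition merge_budget X : R := if X == set0 then 0 else 1 + log_factor eta #|X|.

Lemma merge_budget_ge0 X : 0 <= merge_budget X.
Proof.
rewrite /merge_budget; case: eqP => // /eqP Xn0.
by rewrite addr_ge0 ?log_factor_ge0 ?card_gt0.
Qed.

Lemma merge_budgetS X Y : X \subset Y -> merge_budget X <= merge_budget Y.
Proof.
move=> sXY; rewrite /merge_budget; case: eqP => [_|/eqP Xn0].
  by case: eqP => // /eqP Yn0; rewrite addr_ge0 ?log_factor_ge0 ?card_gt0.
have Yn0 : Y != set0 by apply: contraNneq Xn0 => Y0; rewrite -subset0 -Y0.
by rewrite (negPf Yn0) lerD2l log_factor_le ?card_gt0 ?subset_leq_card.
Qed.

Lemma merge_budget_le_cap X : merge_budget X <= budget_cap.
Proof.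
apply: le_trans (merge_budgetS (subsetT X)) _; rewrite /merge_budget.
case: eqP => [_|_]; last by rewrite lerD2l le_max cardsT lexx orbT.
by rewrite addr_ge0 // le_max ler01.
Qed.

Lemma merge_budget_shrink Z N : Z != set0 -> eta * #|Z|%:R <= #|N :&: Z|%:R ->
  merge_budget (Z :\: N) + 1 <= merge_budget Z.
Proof.
move=> Zn0 frac; rewrite /merge_budget (negPf Zn0).
case: eqP => [_|/eqP ZN_n0]; first by rewrite add0r lerDl log_factor_ge0 ?card_gt0.
rewrite -addrA lerD2l log_factor_shrink ?card_gt0 //.
move: frac; rewrite -(cardsID N Z) setIC natrD; lra.
Qed.

Definition impure_budget (s : state T) := \sum_(X in s.1 :\: s.2) merge_budget X.

Definition potential (s : state T) : R :=
  2 * impure_budget s + #|s.2|%:R + (2 * budget_cap + 1) * excess s.1.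

Lemma budget_cap_ge1 : 1 <= budget_cap.
Proof. by rewrite lerDl (le_trans ler01) // le_max lexx. Qed.

Lemma potential_ge0 s : 0 <= potential s.
Proof.
have := budget_cap_ge1; have := excess_ge0 R s.1; rewrite /potential.
have : 0 <= impure_budget s by apply: sumr_ge0 => X _; apply: merge_budget_ge0.
have : (0 : R) <= #|s.2|%:R by [].
move: (impure_budget s) (excess s.1) budget_cap #|s.2|%:R => *; nra.
Qed.

Lemma impure_budget_split_le P Pu D A B : D \in P -> D \notin Pu -> A \subset D ->
  impure_budget (split_state (P, Pu) D A B) <= impure_budget (P, Pu) + budget_cap.
Proof.
move=> DP DPu sAD.
have sub : (P :\ D :|: [set A; B]) :\: (Pu :\ D :\ A :\ B) \subset
           (P :\: Pu :\ D) :|: [set A; B].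
  apply/subsetP => X; rewrite !inE.
  by case: (X == A); case: (X == B); case: (X == D); case: (X \in Pu).
rewrite /impure_budget /= (big_setD1_indicator _ (P :\: Pu) D) inE DPu DP mul1r.
apply: le_trans (ler_sum_subset merge_budget_ge0 sub) _.
apply: le_trans (ler_sum_setU merge_budget_ge0 _ _) _.
have := ler_sum_set2 merge_budget_ge0 A B.
have := merge_budgetS sAD; have := merge_budget_le_cap B.
move: (\sum_(_ in _) _) (\sum_(_ in _) _) => *; lra.
Qed.

Lemma potential_split P Pu D A B : wf_state (P, Pu) -> D \in P ->
  impure_wrt Cstar D -> local_split S D A B ->
  wf_state (split_state (P, Pu) D A B) /\
  potential (split_state (P, Pu) D A B) + 1 <= potential (P, Pu).
Proof.
move=> [P_n0 Pu_pure] DP Dimp Dsplit.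
have [An0 Bn0 sAD _ meets_le] := local_split_meets Dimp Dsplit.
split.
  split=> [|X]; last by rewrite !inE => /and4P [_ _ _ /Pu_pure].
  by rewrite !inE (negPf P_n0) andbF !(eq_sym set0) (negPf An0) (negPf Bn0).
have DPu : D \notin Pu by apply/negP => /Pu_pure; apply: impure_not_pure Dimp.
have ib_le := impure_budget_split_le B DP DPu sAD.
have labels_le : #|Pu :\ D :\ A :\ B|%:R <= #|Pu|%:R :> R.
  by rewrite ler_nat; apply/subset_leq_card/subsetP => X; rewrite !inE => /and4P [_ _ _ ->].
move: ib_le labels_le (excess_split R DP An0 Bn0 meets_le) budget_cap_ge1.
rewrite /potential /=.
move: (excess _) (excess _) (impure_budget _) (impure_budget _) budget_cap.
move=> *; nra.
Qed.

Lemma leftover_empty Z N : 1 * #|Z|%:R <= #|N :&: Z|%:R :> R -> Z :\: N = set0.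
Proof.
rewrite mul1r ler_nat => le_card; apply/eqP; rewrite setD_eq0.
by apply/setIidPr/eqP; rewrite eqEcard subsetIr le_card.
Qed.

Lemma leftover_budget Pu Z N : Z != set0 ->
  (if Z \in Pu then 1 else eta) * #|Z|%:R <= #|N :&: Z|%:R ->
  merge_budget (Z :\: N) + (Z \notin Pu)%:R <= (Z \notin Pu)%:R * merge_budget Z.
Proof.
move=> Zn0; case: ifP => ZPu frac /=.
  by rewrite mul0r addr0 (leftover_empty frac) /merge_budget eqxx.
by rewrite mul1r merge_budget_shrink.
Qed.

Section MergeAccounting.
Variables (P Pu : {set {set T}}) (Ci Cj N : {set T}).
Hypotheses (CiP : Ci \in P) (CjP : Cj \in P) (neij : Ci != Cj).

Lemma impure_budget_merge_le : impure_budget (merge_state (P, Pu) Ci Cj N) <=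
  impure_budget (P :\ Ci :\ Cj, Pu) + merge_budget (Ci :\: N) + merge_budget (Cj :\: N).
Proof.
have sub : (merge_state (P, Pu) Ci Cj N).1 :\: (merge_state (P, Pu) Ci Cj N).2 \subset
           ((P :\ Ci :\ Cj) :\: Pu) :|: [set Ci :\: N; Cj :\: N].
  apply/subsetP => X; rewrite /= in_setD in_setD1 !in_setU.
  case: ifP => _; case: ifP => _; rewrite !inE;
  case: (X == Ci :\: N); case: (X == Cj :\: N); rewrite ?orbT ?andbT //;
  case: (X == set0); case: (X == N); case: (X \in Pu); case: (X \in P);
  by case: (X == Ci); case: (X == Cj).
apply: le_trans (ler_sum_subset merge_budget_ge0 sub) _.
apply: le_trans (ler_sum_setU merge_budget_ge0 _ _) _.
by rewrite -addrA lerD2l; apply: ler_sum_set2; apply: merge_budget_ge0.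
Qed.

Lemma impure_budget_merge_eq : impure_budget (P, Pu) =
  (Ci \notin Pu)%:R * merge_budget Ci +
  ((Cj \notin Pu)%:R * merge_budget Cj + impure_budget (P :\ Ci :\ Cj, Pu)).
Proof.
rewrite /impure_budget /= (big_setD1_indicator _ _ Ci) (big_setD1_indicator _ _ Cj).
rewrite !inE CiP CjP (eq_sym Cj) neij !andbT /=; congr (_ + (_ + _)).
by apply: eq_bigl => X; rewrite !inE; case: (X \in Pu); rewrite ?andbF.
Qed.

End MergeAccounting.

Lemma potential_merge P Pu Ci Cj N : wf_state (P, Pu) ->
  Ci \in P -> Cj \in P -> Ci != Cj -> pure N ->
  (if Ci \in Pu then 1 else eta) * #|Ci|%:R <= #|N :&: Ci|%:R ->
  (if Cj \in Pu then 1 else eta) * #|Cj|%:R <= #|N :&: Cj|%:R ->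
  wf_state (merge_state (P, Pu) Ci Cj N) /\
  potential (merge_state (P, Pu) Ci Cj N) + 1 <= potential (P, Pu).
Proof.
move=> [P_n0 Pu_pure] CiP CjP neij Npure Ci_frac Cj_frac.
have Ci_n0 : Ci != set0 by apply: contraNneq P_n0 => <-.
have Cj_n0 : Cj != set0 by apply: contraNneq P_n0 => <-.
have Ci_empty : Ci \in Pu -> Ci :\: N = set0.
  by move=> CiPu; apply: leftover_empty; move: Ci_frac; rewrite CiPu.
have Cj_empty : Cj \in Pu -> Cj :\: N = set0.
  by move=> CjPu; apply: leftover_empty; move: Cj_frac; rewrite CjPu.
have labels_sub := merge_labels_subset P Ci_empty Cj_empty.
split.
  split=> [|X /(subsetP labels_sub)]; first by rewrite /= in_setD1 eqxx.
  by rewrite !inE => /orP [/eqP -> // | /and3P [_ _ /Pu_pure]].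
have labels := card_merge_labels P neij Ci_empty Cj_empty.
rewrite -(ler_nat R) !natrD in labels.
have label_i : (Ci \notin Pu)%:R + (Ci \in Pu)%:R = 1 :> R.
  by case: (Ci \in Pu); rewrite /= ?add0r ?addr0.
have label_j : (Cj \notin Pu)%:R + (Cj \in Pu)%:R = 1 :> R.
  by case: (Cj \in Pu); rewrite /= ?add0r ?addr0.
have ex_le := excess_merge R Pu CiP CjP neij Npure.
have c_ex_le : (2 * budget_cap + 1) * excess (merge_state (P, Pu) Ci Cj N).1 <=
               (2 * budget_cap + 1) * excess P.
  by rewrite ler_wpM2l // addr_ge0 // mulr_ge0 // (le_trans ler01 budget_cap_ge1).
move: (impure_budget_merge_le P Pu Ci Cj N) (impure_budget_merge_eq Pu CiP CjP neij).
move: (leftover_budget Ci_n0 Ci_frac) (leftover_budget Cj_n0 Cj_frac) labels c_ex_le.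
move: (ler0n R (Ci \notin Pu)) (ler0n R (Cj \notin Pu)); rewrite /potential /=.
move: (impure_budget _) (impure_budget _) (impure_budget _) => *; lra.
Qed.

Lemma potential_step s s' : wf_state s -> step S Cstar eta s s' ->
  wf_state s' /\ potential s' + 1 <= potential s.
Proof.
case: s => P Pu wf [[D [A [B [DP Dimp Dsplit ->]]]] | [Ci [Cj [N [[CiP CjP neij] []]]]]].
  exact: potential_split.
move=> [Cl Cl_target [Ci_frac Cj_frac]] Nmerge ->.
have [P_n0 Pu_pure] := wf.
have e_ok Z : (if Z \in Pu then 1 else eta) = eta \/
    (if Z \in Pu then 1 else eta) = 1 /\ pure Z.
  by case: ifP => [ZPu|_]; [right; split => //; apply: Pu_pure | left].
have Ci_n0 : Ci != set0 by apply: contraNneq P_n0 => <-.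
have Cj_n0 : Cj != set0 by apply: contraNneq P_n0 => <-.
have [Npure _] := threshold_merge_pure eta_gt0 Ci_n0 Cj_n0 Cl_target Ci_frac Cj_frac
  (e_ok Ci) (e_ok Cj) Nmerge.
case: Nmerge => E _ [_ [Ci_cut Cj_cut]].
exact: potential_merge.
Qed.

Lemma potential_run m (s : nat -> state T) : wf_state (s 0%N) ->
  (forall i, (i < m)%N -> step S Cstar eta (s i) (s i.+1)) -> m%:R <= potential (s 0%N).
Proof.
move=> wf0 steps.
have run i : (i <= m)%N -> wf_state (s i) /\ potential (s i) + i%:R <= potential (s 0%N).
  elim: i => [_|i IH lt_im]; first by rewrite addr0.
  have [wf_i le_i] := IH (ltnW lt_im).
  have [wf_i1 step_i] := potential_step wf_i (steps i lt_im).
  by split => //; move: le_i step_i; rewrite -natr1; lra.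
have [_ le_m] := run m (leqnn m); move: (potential_ge0 (s m)) le_m; lra.
Qed.

Lemma potential_init C0 : clustering C0 ->
  potential (C0, set0) <= (2 * budget_cap + 1) * (total_meets C0)%:R.
Proof.
move=> C0_clust; rewrite /potential /impure_budget /= setD0 cards0 addr0.
rewrite total_meets_excess //.
have : \sum_(X in C0) merge_budget X <= budget_cap * #|C0|%:R.
  apply: le_trans (ler_sum _ (fun X _ => merge_budget_le_cap X)) _.
  by rewrite sumr_const mulr_natr.
have := excess_ge0 R C0; have : (0 : R) <= #|C0|%:R by [].
move: budget_cap_ge1 (\sum_(_ in _) _) (excess C0) (#|C0|%:R) budget_cap => *; nra.
Qed.

Lemma run_length_le gamma C0 m (s : nat -> state T) :
  natural_clustering_error Cstar gamma -> clustering C0 -> s 0%N = (C0, set0) ->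
  (forall i, (i < m)%N -> step S Cstar eta (s i) (s i.+1)) ->
  m%:R <= 5%:R * (gamma C0 + #|Cstar|)%:R * Num.max 1 (log_factor eta #|T|).
Proof.
move=> gamma_err C0_clust s0 steps.
have wf0 : wf_state (s 0%N).
  by rewrite s0; split=> [|X]; [rewrite (partition0 C0_clust) | rewrite inE].
have := potential_run wf0 steps; rewrite s0 => m_le.
have meets_le : (total_meets C0)%:R <= (gamma C0 + #|Cstar|)%:R :> R.
  rewrite ler_nat; move: (total_meets_le_error gamma_err C0_clust).
  move: (card_le_total_meets C0_clust); lia.
move: (potential_init C0_clust) m_le meets_le (ler0n R (total_meets C0)).
have : 1 <= Num.max 1 (log_factor eta #|T|) by rewrite le_max lexx.
rewrite /budget_cap; move: (Num.max _ _) (potential _) ((total_meets C0)%:R).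
move: ((gamma C0 + #|Cstar|)%:R) (ler0n R (gamma C0 + #|Cstar|)) => *; nra.
Qed.

End Potential.

End Separation.

End Targets.

Theorem corollary19 :
  exists c : nat,
  forall (R : realType) (T : finType) (S : T -> T -> R)
         (Cstar : {set {set T}}) (gamma : {set {set T}} -> nat)
         (eta : R) (C0 : {set {set T}}),
    (forall x y, S x y = S y x) ->
    clustering Cstar ->
    strict_threshold_separation S Cstar ->
    natural_clustering_error Cstar gamma ->
    0 < eta -> eta <= 1 ->
    clustering C0 ->
    forall (m : nat) (s : nat -> state T),
      s 0%N = (C0, set0) ->
      (forall i, (i < m)%N -> step S Cstar eta (s i) (s i.+1)) ->
      (forall i, (i < m)%N -> (s i).1 != Cstar) ->
      m%:R <= c%:R * (gamma C0 + #|Cstar|)%:R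
                   * Num.max 1 (log_factor eta #|T|).
Proof.
exists 5%N => R T S Cstar gamma eta C0 _ Cstar_clust sep gamma_err eta_gt0 eta_le1 C0_clust.
move=> m s s0 steps _; have [t [S_in S_out]] := threshold_of_separation sep.
exact (run_length_le Cstar_clust S_in S_out eta_gt0 eta_le1 gamma_err C0_clust s0 steps).
Qed.
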